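(* For all real $a\geq1$ and $\lambda\geq1$, $$\frac{c(\lambda a)}{\lambda a}\leq\frac{c(a)}{a}.$$
   Context: $c(a):=\inf\{A>0: E(1,a)\text{ symplectically embeds into } C(A)\}$ for real $a\geq1$, where $E(1,a)=\{\pi(x_1^2+y_1^2)+\pi(x_2^2+y_2^2)/a<1\}\subset\mathbb{R}^4$ with the standard symplectic form, and $C(A)=D^2(A)\times D^2(A)$ with $D^2(A)$ the open disc of area $A$. *)

(* R^4 is modelled as row vectors 'rV[R]_4 with
   coordinates (x1, y1, x2, y2) in this order. *)
From HB Require Import structures.
From mathcomp Require Import all_boot all_order all_algebra.
From mathcomp Require Import all_classical all_reals all_analysis.
Set Implicit Arguments. Unset Strict Implicit. Unset Printing Implicit Defensive.
Import Order.TTheory GRing.Theory Num.Theory.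
Import numFieldNormedType.Exports.
Local Open Scope ring_scope.
Local Open Scope classical_set_scope.

Definition cx1 {R : realType} (v : 'rV[R]_4) : R := v ord0 (@Ordinal 4 0 isT).
Definition cy1 {R : realType} (v : 'rV[R]_4) : R := v ord0 (@Ordinal 4 1 isT).
Definition cx2 {R : realType} (v : 'rV[R]_4) : R := v ord0 (@Ordinal 4 2 isT).
Definition cy2 {R : realType} (v : 'rV[R]_4) : R := v ord0 (@Ordinal 4 3 isT).

Definition omega0 {R : realType} (u w : 'rV[R]_4) : R :=
  cx1 u * cy1 w - cy1 u * cx1 w + cx2 u * cy2 w - cy2 u * cx2 w.

Fixpoint iterD {R : realType} (vs : seq 'rV[R]_4) (f : 'rV[R]_4 -> 'rV[R]_4)
  : 'rV[R]_4 -> 'rV[R]_4 :=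
  match vs with
  | [::] => f
  | v :: vs' => fun x => 'D_v (iterD vs' f) x
  end.

Definition smooth_on {R : realType} (U : set 'rV[R]_4) (f : 'rV[R]_4 -> 'rV[R]_4) :=
  forall vs : seq 'rV[R]_4,
    (forall x, U x -> forall v, derivable (iterD vs f) x v) /\
    (forall x, U x -> {for x, continuous (iterD vs f)}).

Definition symplectic_embedding {R : realType} (U T : set 'rV[R]_4)
  (f : 'rV[R]_4 -> 'rV[R]_4) :=
  [/\ smooth_on U f,
      (forall x y, U x -> U y -> f x = f y -> x = y),
      (forall x, U x -> forall u w, omega0 ('D_u f x) ('D_w f x) = omega0 u w)
    & (forall x, U x -> T (f x))].

Definition ellipsoid {R : realType} (a : R) : set 'rV[R]_4 :=
  [set v | pi * (cx1 v ^+ 2 + cy1 v ^+ 2) + pi * (cx2 v ^+ 2 + cy2 v ^+ 2) / a < 1].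

Definition polydisk {R : realType} (A : R) : set 'rV[R]_4 :=
  [set v | pi * (cx1 v ^+ 2 + cy1 v ^+ 2) < A /\ pi * (cx2 v ^+ 2 + cy2 v ^+ 2) < A].

Definition cap_c {R : realType} (a : R) : R :=
  inf [set A : R | 0 < A /\ exists f, symplectic_embedding (ellipsoid a) (polydisk A) f].

(* Conformal rescaling. If f embeds E(1,a) symplectically into C(A), then its conjugate
   y |-> k f(y/k) by the dilation of ratio k has the same derivative, hence is again
   symplectic, and it embeds k E(1,a) = E(k^2, k^2 a), which contains E(1, k^2 a), into
   k C(A) = C(k^2 A). With k^2 = lambda this gives c(lambda a) <= lambda c(a). *)
From Pilot Require Import Defs.
From HB Require Import structures.
From mathcomp Require Import all_boot all_order all_algebra.
From mathcomp Require Import all_classical all_reals all_analysis.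
From mathcomp Require Import ring lra.
Import Order.TTheory GRing.Theory Num.Theory.
Import numFieldNormedType.Exports.
Local Open Scope ring_scope.
Local Open Scope classical_set_scope.

Lemma mulrl_dnbhs0 {R : numFieldType} (t : R) : t != 0 -> ( *%R t) @ 0^' --> 0^'.
Proof.
move=> t0; have := @continuous_injective_withinNx R R ( *%R t) 0.
rewrite /= mulr0; apply; first exact: mulrl_continuous.
by move=> y /eqP; rewrite mulf_eq0 (negbTE t0) => /eqP.
Qed.

Section ScaledDerivative.
Context {R : numFieldType} {V W : normedModType R}.

Lemma cvg_scale_dnbhs0 (q : R -> W) (a t : R) (l : W) : t != 0 ->
  q @ 0^' --> l -> (fun h => a *: q (t * h)) @ 0^' --> a *: l.
Proof.
move=> t0 ql; apply: cvgZl_tmp.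
by have := cvg_comp _ _ (mulrl_dnbhs0 _ t0) ql.
Qed.

Definition diff_quot (F : V -> W) (x v : V) : R -> W :=
  fun h => h^-1 *: ((F \o shift x) (h *: v) - F x).

Lemma diff_quot_scale (F : V -> W) (c t : R) (x v : V) : t != 0 ->
  diff_quot (fun y => c *: F (t *: y)) x v =
  (fun h => (c * t) *: diff_quot F (t *: x) v (t * h)).
Proof.
move=> t0; apply/funext => h; rewrite /diff_quot /shift /=.
rewrite [t *: (_ + _)]scalerDr [t *: (h *: v)]scalerA -scalerBr !scalerA; congr (_ *: _).
by rewrite invfM mulrA -(mulrA c) mulfV // mulr1 mulrC.
Qed.

Lemma derivable_scale (F : V -> W) (c t : R) (x v : V) : t != 0 ->
  derivable F (t *: x) v -> derivable (fun y => c *: F (t *: y)) x v.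
Proof.
move=> t0 dF; rewrite /derivable -/(diff_quot _ x v) diff_quot_scale //.
by apply/cvg_ex; exists ((c * t) *: 'D_v F (t *: x)); exact: cvg_scale_dnbhs0.
Qed.

End ScaledDerivative.

Section ScaledDerivativeMatrix.
Context {R : numFieldType} {V : normedModType R} {m n : nat}.
Local Notation W := 'M[R]_(m, n).

(* A divergent limit defaults to [point], which is 0 for matrices but not in a general
   normed module; this is what makes [derive_scale] hold without derivability. *)
Lemma lim_mx_dvg (F : set_system W) : ~ cvg F -> lim F = 0.
Proof. by move/dvgP => ->; apply/matrixP => i j; rewrite !mxE. Qed.

Lemma lim_scale_dnbhs0 (q : R -> W) (a t : R) : a != 0 -> t != 0 ->
  lim ((fun h => a *: q (t * h)) @ 0^') = a *: lim (q @ 0^').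
Proof.
move=> a0 t0; have [qc|qdvg] := pselect (cvg (q @ 0^')).
  by apply: cvg_lim => //; exact: cvg_scale_dnbhs0.
suff sqdvg : ~ cvg ((fun h => a *: q (t * h)) @ 0^').
  by rewrite (lim_mx_dvg _ sqdvg) (lim_mx_dvg _ qdvg) scaler0.
move=> sqc; apply: qdvg; apply/cvg_ex.
have qE : (fun h => a^-1 *: (a *: q (t * (t^-1 * h)))) = q.
  by apply/funext => h; rewrite scalerA mulVf // scale1r mulrA mulfV // mul1r.
have := cvg_scale_dnbhs0 _ a^-1 _ _ (invr_neq0 t0) sqc; rewrite qE.
by move=> qc; eexists; exact: qc.
Qed.

Lemma derive_scale (F : V -> W) (c t : R) (x v : V) : t != 0 ->
  'D_v (fun y => c *: F (t *: y)) x = (c * t) *: 'D_v F (t *: x).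
Proof.
move=> t0; have [->|c0] := eqVneq c 0.
  have -> : (fun y => 0 *: F (t *: y)) = cst 0 by apply/funext => y; rewrite scale0r.
  by rewrite derive_cst mul0r scale0r.
rewrite /derive -/(diff_quot _ x v) -/(diff_quot _ (t *: x) v) diff_quot_scale //.
by rewrite lim_scale_dnbhs0 // mulf_neq0.
Qed.

End ScaledDerivativeMatrix.

Section Rescaling.
Context {R : realType}.
Local Notation V := 'rV[R]_4.

Lemma iterD_scale (vs : seq V) (F : V -> V) (c t : R) : t != 0 ->
  Defs.iterD vs (fun y => c *: F (t *: y)) =
  (fun y => (c * t ^+ seq.size vs) *: Defs.iterD vs F (t *: y)).
Proof.
move=> t0; elim: vs => [|v vs IH] /=; first by apply/funext => y; rewrite mulr1.
apply/funext => y; rewrite IH derive_scale //.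
by rewrite exprSr mulrA.
Qed.

Lemma sqr_z1Z (k : R) (v : V) :
  cx1 (k *: v) ^+ 2 + cy1 (k *: v) ^+ 2 = k ^+ 2 * (cx1 v ^+ 2 + cy1 v ^+ 2).
Proof. by rewrite /cx1 /cy1 !mxE !exprMn mulrDr. Qed.

Lemma sqr_z2Z (k : R) (v : V) :
  cx2 (k *: v) ^+ 2 + cy2 (k *: v) ^+ 2 = k ^+ 2 * (cx2 v ^+ 2 + cy2 v ^+ 2).
Proof. by rewrite /cx2 /cy2 !mxE !exprMn mulrDr. Qed.

Lemma pi_sqr_ge0 (u w : R) : 0 <= pi * (u ^+ 2 + w ^+ 2).
Proof. by apply: mulr_ge0; [exact/ltW/pi_gt0 | rewrite addr_ge0 ?sqr_ge0]. Qed.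

Lemma ellipsoid_le (a b : R) : 0 < a <= b -> ellipsoid a `<=` ellipsoid b.
Proof.
move=> /andP[a0 ab] x; rewrite /ellipsoid /=.
set X2 := cx2 x ^+ 2 + cy2 x ^+ 2.
have X2ge0 : 0 <= pi * X2 := pi_sqr_ge0 _ _.
suff : pi * X2 / b <= pi * X2 / a by lra.
by rewrite ler_wpM2l // lef_pV2 ?posrE // (lt_le_trans a0).
Qed.

Lemma ellipsoid_mul_scale (a k : R) (x : V) : 0 < a -> 1 <= k ->
  ellipsoid (k ^+ 2 * a) x -> ellipsoid a (k^-1 *: x).
Proof.
move=> a0 k1; rewrite /ellipsoid /= !sqr_z1Z !sqr_z2Z exprVn.
set X1 := cx1 x ^+ 2 + cy1 x ^+ 2; set X2 := cx2 x ^+ 2 + cy2 x ^+ 2.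
have k2gt0 : 0 < k ^+ 2 by rewrite exprn_gt0 // (lt_le_trans ltr01 k1).
have X1ge0 : 0 <= pi * X1 := pi_sqr_ge0 _ _.
have k2V_le1 : (k ^+ 2)^-1 <= 1 by rewrite invf_le1 // expr_ge1 // (le_trans ler01 k1).
have -> : pi * ((k ^+ 2)^-1 * X1) = (k ^+ 2)^-1 * (pi * X1) by ring.
have -> : pi * ((k ^+ 2)^-1 * X2) / a = (k ^+ 2)^-1 * (pi * X2 / a) by ring.
have -> : pi * X2 / (k ^+ 2 * a) = (k ^+ 2)^-1 * (pi * X2 / a) by rewrite invfM; ring.
have : (k ^+ 2)^-1 * (pi * X1) <= pi * X1 by rewrite ler_piMl.
lra.
Qed.

Lemma polydisk_scale (A k : R) (w : V) : k != 0 ->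
  polydisk A w -> polydisk (k ^+ 2 * A) (k *: w).
Proof.
move=> k0; rewrite /polydisk /= !sqr_z1Z !sqr_z2Z !(mulrCA pi).
have k2gt0 : 0 < k ^+ 2 by rewrite exprn_even_gt0.
by rewrite !ltr_pM2l.
Qed.

Lemma symplectic_embedding_sub (U U' T : set V) (f : V -> V) : U' `<=` U ->
  symplectic_embedding U T f -> symplectic_embedding U' T f.
Proof.
move=> U'U [smooth inj sympl img]; split=> [vs | x y Ux Uy | x Ux | x Ux].
- by have [df cf] := smooth vs; split=> x /U'U; [exact: df | exact: cf].
- by apply: inj; exact: U'U.
- exact/sympl/U'U.
- exact/img/U'U.
Qed.

Lemma symplectic_embedding_scale (k : R) (U U' T T' : set V) (f : V -> V) : k != 0 ->
  (forall y, U' y -> U (k^-1 *: y)) -> (forall w, T w -> T' (k *: w)) ->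
  symplectic_embedding U T f ->
  symplectic_embedding U' T' (fun y => k *: f (k^-1 *: y)).
Proof.
move=> k0 U'U TT' [smooth inj sympl img].
have kV0 : k^-1 != 0 by rewrite invr_eq0.
split=> [vs | x y Ux Uy | x Ux u w | x Ux].
- have [df cf] := smooth vs; split=> x Ux; rewrite (iterD_scale _ _ _ _ kV0).
    by move=> v; apply: derivable_scale => //; exact/df/U'U.
  apply: continuous_comp (@scaler_continuous _ _ _ _).
  exact: continuous_comp (@scaler_continuous _ _ _ x) (cf _ (U'U _ Ux)).
- by move=> /(scalerI k0)/(inj _ _ (U'U _ Ux) (U'U _ Uy))/(scalerI kV0).
- by rewrite !(derive_scale _ _ _ _ _ kV0) mulfV // !scale1r; exact/sympl/U'U.
- exact/TT'/img/U'U.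
Qed.
End Rescaling.

Lemma inf_le_mul {R : realType} (S T : set R) (k : R) : 0 < k -> lbound T 0 ->
  (forall x, S x -> T (k * x)) -> (T !=set0 -> S !=set0) -> inf T <= k * inf S.
Proof.
move=> k0 T_ge0 ST TS; have [[x Sx]|S0] := pselect (S !=set0).
  rewrite -ler_pdivrMl //; apply: lb_le_inf; first by exists x.
  by move=> y Sy; rewrite ler_pdivrMl //; apply: ge_inf; [exists 0 | exact: ST].
have T_eq0 : T = set0 by apply/seteqP; split=> // y Ty; apply/S0/TS; exists y.
have S_eq0 : S = set0 by apply/seteqP; split=> // y Sy; apply: S0; exists y.
by rewrite T_eq0 S_eq0 inf0 mulr0.
Qed.

Lemma cap_c_mul_le {R : realType} (a lam : R) : 0 < a -> 1 <= lam ->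
  cap_c (lam * a) <= lam * cap_c a.
Proof.
move=> a0 lam1; have lam0 : 0 < lam := lt_le_trans ltr01 lam1.
set k := Num.sqrt lam.
have k1 : 1 <= k by rewrite -sqrtr1 ler_wsqrtr.
have k0 : k != 0 by rewrite gt_eqF // (lt_le_trans ltr01 k1).
have lamE : lam = k ^+ 2 by rewrite sqr_sqrtr // ltW.
apply: inf_le_mul => //.
- by move=> A [A0 _]; exact: ltW.
- move=> A [A0 [f emb]]; split; first by rewrite mulr_gt0.
  exists (fun y => k *: f (k^-1 *: y)); rewrite lamE.
  apply: symplectic_embedding_scale emb => // [y|w].
    exact: ellipsoid_mul_scale.
  exact: polydisk_scale.
- move=> [A [A0 [f emb]]]; exists A; split=> //; exists f.
  apply: symplectic_embedding_sub emb; apply: ellipsoid_le.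
  by rewrite a0 ler_peMl // ltW.
Qed.

Theorem lemma4p2 (R : realType) (a lambda : R) :
  1 <= a -> 1 <= lambda ->
  cap_c (lambda * a) / (lambda * a) <= cap_c a / a.
Proof.
move=> a1 lam1; have a0 : 0 < a := lt_le_trans ltr01 a1.
have lam0 : 0 < lambda := lt_le_trans ltr01 lam1.
rewrite ler_pdivrMr ?mulr_gt0 // mulrCA divfK ?gt_eqF //.
exact: cap_c_mul_le.
Qed.
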